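(* Let $p\neq 2$ be a prime and $G=Z_{p^{\lambda_1}}\times\cdots\times Z_{p^{\lambda_n}}$ with $0<\lambda_1<\cdots<\lambda_n$. The poset $J(G)$ is self-dual; an order-reversing involution of $J(G)$ is given by $J(i,j)\mapsto J(i,\lambda_i-j+1)$.
   Context: Tuples are ordered componentwise; for $\mathbf 0\le\mathbf a\le(\lambda_1,\dots,\lambda_n)$, $T(\mathbf a)$ is the set of $(g_1,\dots,g_n)\in G$ with $|g_i|=p^{a_i}$, and $R(\mathbf a)=\bigcup_{\mathbf b\le\mathbf a}T(\mathbf b)$. For $i\in\{1,\dots,n\}$ and $j\in\{1,\dots,\lambda_i\}$, $J(i,j)=R(\mathbf a)$ where $a_k=j$ for $k\ge i$ and $a_k=\max\{0,\,j-(\lambda_i-\lambda_k)\}$ for $k<i$. $J(G)$ is the set of all $J(i,j)$ (these are exactly the join-irreducible elements of the lattice of characteristic subgroups of $G$), partially ordered by inclusion. *)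

From mathcomp Require Import all_boot all_order all_algebra all_fingroup.
Set Implicit Arguments. Unset Strict Implicit. Unset Printing Implicit Defensive.

(* Indices are 0-based: paper's index i in {1..n} is i : 'I_n here.
   lam i = lambda_{i+1}. *)

Definition Gtype (p n : nat) (lam : 'I_n -> nat) : finType :=
  {dffun forall i : 'I_n, 'Z_(p ^ lam i)}.

(* R(a) = union over 0 <= b <= a of T(b), T(b) = {g | |g_k| = p^(b_k)}. *)
Definition Rset (p n : nat) (lam : 'I_n -> nat) (a : 'I_n -> nat)
  : {set Gtype p lam} :=
  [set g : Gtype p lam |
     [forall k : 'I_n, [exists b : 'I_(a k).+1, #[g k]%g == p ^ b]]].

Definition Jexp (n : nat) (lam : 'I_n -> nat) (i : 'I_n) (j : nat)
  : 'I_n -> nat :=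
  fun k => if (i <= k)%N then j else maxn 0 (j - (lam i - lam k)).

Definition Jset (p n : nat) (lam : 'I_n -> nat) (i : 'I_n) (j : nat)
  : {set Gtype p lam} := Rset p lam (Jexp lam i j).

Definition JG (p n : nat) (lam : 'I_n -> nat) : {set {set Gtype p lam}} :=
  [set X | [exists i : 'I_n, [exists j : 'I_(lam i).+1,
             (0 < j)%N && (X == Jset p lam i j)]]].

From mathcomp Require Import all_boot all_order all_algebra all_fingroup.
From mathcomp Require Import all_solvable zify.

Set Implicit Arguments.
Unset Strict Implicit.
Unset Printing Implicit Defensive.

(* R(a) is an order embedding of the exponent tuples a <= lam: an element of
   order p^(a k) concentrated in coordinate k separates R(a) from R(a') as
   soon as a k > a' k.  The exponent tuple of J(i,j) is
   k |-> min(j, lam_k - (lam_i - j)), so J(i,j) is determined by the pair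
   (j, lam_i - j) and J(i,j) <= J(i',j') iff j <= j' and
   lam_i' - j' <= lam_i - j.  The map j |-> lam_i - j + 1 sends this pair to
   (lam_i - j + 1, j - 1), i.e. swaps its entries up to a shift by one,
   which reverses the order. *)

Lemma order_Zp1X (p l m : nat) : (1 < p)%N -> (0 < l)%N -> (m <= l)%N ->
  #[((Zp1 : 'Z_(p ^ l)) ^+ (p ^ (l - m)))%g]%g = p ^ m.
Proof.
move=> p_gt1 l_gt0 m_le_l.
have pl_gt1 : (1 < p ^ l)%N by rewrite -(expn0 p) ltn_exp2l.
rewrite orderXdiv order_Zp1 Zp_cast //; last by rewrite dvdn_exp2l ?leq_subr.
by rewrite -{1}(subnKC m_le_l) expnD mulnK // expn_gt0 ltnW.
Qed.

Section ExponentTuples.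

Variables (p n : nat) (lam : 'I_n -> nat).
(* Positivity matters: 'Z_(p ^ 0) is 'Z_2, not the trivial group. *)
Hypotheses (p_gt1 : (1 < p)%N) (lam_gt0 : forall k, (0 < lam k)%N).

Lemma Rset_subset (a a' : 'I_n -> nat) : (forall k, a k <= lam k)%N ->
  (Rset p lam a \subset Rset p lam a') = [forall k, a k <= a' k]%N.
Proof.
move=> a_le_lam; apply/subsetP/forallP => [sub k0 | a_le g].
  pose x k : 'Z_(p ^ lam k) := ((Zp1 : 'Z_(p ^ lam k)) ^+ (p ^ (lam k - a k0)))%g.
  pose g : Gtype p lam := [ffun k => if k == k0 then x k else 0%R].
  have /sub : g \in Rset p lam a.
    rewrite inE; apply/forallP => k; apply/existsP; rewrite ffunE.
    case: eqP => [->|_]; first by exists ord_max; rewrite order_Zp1X.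
    by exists ord0; rewrite expn0 order1.
  rewrite inE => /forallP /(_ k0) /existsP [b].
  rewrite ffunE eqxx order_Zp1X // eqn_exp2l // => /eqP ->.
  by rewrite -ltnS ltn_ord.
rewrite !inE => /forallP g_in; apply/forallP => k.
have /existsP [b ord_gk] := g_in k; apply/existsP.
have b_lt : (b < (a' k).+1)%N by rewrite ltnS (leq_trans _ (a_le k)) // -ltnS.
by exists (Ordinal b_lt).
Qed.

End ExponentTuples.

Section JoinIrreducibles.

Variables (p n : nat) (lam : 'I_n -> nat).
Hypotheses (p_gt1 : (1 < p)%N) (lam_gt0 : forall k, (0 < lam k)%N).
Hypothesis lam_mono : forall i k : 'I_n, (i < k)%N -> (lam i < lam k)%N.

Lemma lam_le (i k : 'I_n) : (i <= k)%N -> (lam i <= lam k)%N.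
Proof. by rewrite leq_eqVlt => /predU1P [/val_inj -> // | /lam_mono/ltnW]. Qed.

Lemma lam_inj : injective lam.
Proof.
move=> i k eq_lam; case: (ltngtP i k) => [/lam_mono | /lam_mono | /val_inj //];
  by rewrite eq_lam ltnn.
Qed.

Lemma Jexp_minn (i k : 'I_n) (j : nat) : (j <= lam i)%N ->
  Jexp lam i j k = minn j (lam k - (lam i - j)).
Proof.
move=> j_le; rewrite /Jexp; case: leqP => [/lam_le | /ltnW /lam_le]; lia.
Qed.

Lemma Jset_subset (i i' : 'I_n) (j j' : nat) :
  (1 <= j <= lam i)%N -> (j' <= lam i')%N ->
  (Jset p lam i j \subset Jset p lam i' j') =
  (j <= j') && (lam i' - j' <= lam i - j)%N.
Proof.
move=> /andP [j_gt0 j_le] j'_le.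
have Jexp_le_lam k : (Jexp lam i j k <= lam k)%N by rewrite Jexp_minn //; lia.
rewrite /Jset Rset_subset //; apply/forallP/andP => [/(_ i) | [le_j le_co] k];
  rewrite !Jexp_minn //; lia.
Qed.

Lemma Jset_inj (i i' : 'I_n) (j j' : nat) :
  (1 <= j <= lam i)%N -> (1 <= j' <= lam i')%N ->
  Jset p lam i j = Jset p lam i' j' -> i = i' /\ j = j'.
Proof.
move=> j_range j'_range eqJ.
have /andP [j_gt0 j_le] := j_range; have /andP [j'_gt0 j'_le] := j'_range.
have : Jset p lam i j \subset Jset p lam i' j' by rewrite eqJ.
have : Jset p lam i' j' \subset Jset p lam i j by rewrite eqJ.
rewrite !Jset_subset // => /andP [ge_j ge_co] /andP [le_j le_co].
have eq_j : j = j' by lia.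
by split=> //; apply: lam_inj; lia.
Qed.

Lemma JGP (X : {set Gtype p lam}) :
  reflect (exists i j, (1 <= j <= lam i)%N /\ X = Jset p lam i j)
          (X \in JG p lam).
Proof.
apply: (iffP idP) => [|[i [j [/andP [j_gt0 j_le] ->]]]].
  rewrite inE => /existsP [i /existsP [j /andP [j_gt0 /eqP ->]]].
  by exists i, j; rewrite j_gt0 -ltnS ltn_ord.
rewrite inE; apply/existsP; exists i; apply/existsP.
by exists (Ordinal (j_le : (j < (lam i).+1)%N)); rewrite /= j_gt0 eqxx.
Qed.

(* Outside J(G) the map is the identity; only its values on J(G) matter. *)
Definition Jdual (X : {set Gtype p lam}) : {set Gtype p lam} :=
  if [pick ij : {i : 'I_n & 'I_(lam i).+1} |
        (0 < tagged ij)%N && (X == Jset p lam (tag ij) (tagged ij))]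
  is Some ij then Jset p lam (tag ij) (lam (tag ij) - tagged ij + 1) else X.

Lemma Jdual_Jset (i : 'I_n) (j : nat) : (1 <= j <= lam i)%N ->
  Jdual (Jset p lam i j) = Jset p lam i (lam i - j + 1).
Proof.
move=> j_range; rewrite /Jdual.
case: pickP => [[i' j'] /= /andP [j'_gt0 /eqP eqJ]|].
  have j'_range : (1 <= j' <= lam i')%N by rewrite j'_gt0 -ltnS ltn_ord.
  by have [eq_i ->] := Jset_inj j'_range j_range (esym eqJ); rewrite eq_i.
have /andP [j_gt0 j_le] := j_range.
move=> /(_ (Tagged _ (Ordinal (j_le : (j < (lam i).+1)%N)))) /=.
by rewrite j_gt0 eqxx.
Qed.

End JoinIrreducibles.

(* The hypothesis p != 2 is only needed in the paper to identify J(G) with the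
   join-irreducible characteristic subgroups; the poset of the sets J(i,j)
   is self-dual for every prime p. *)
Theorem mainTheorem17 (p n : nat) (lam : 'I_n -> nat) :
  prime p -> p != 2 ->
  (forall i : 'I_n, (0 < lam i)%N) ->
  (forall i k : 'I_n, (i < k)%N -> (lam i < lam k)%N) ->
  exists f : {set Gtype p lam} -> {set Gtype p lam},
    [/\ (forall (i : 'I_n) (j : nat), (1 <= j <= lam i)%N ->
           f (Jset p lam i j) = Jset p lam i (lam i - j + 1)),
        (forall X, X \in JG p lam -> f X \in JG p lam),
        (forall X, X \in JG p lam -> f (f X) = X) &
        (forall X Y, X \in JG p lam -> Y \in JG p lam ->
           X \subset Y -> f Y \subset f X)].
Proof.
move=> /prime_gt1 p_gt1 _ lam_gt0 lam_mono.
have JdualE := Jdual_Jset p_gt1 lam_gt0 lam_mono.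
exists (@Jdual p n lam); split=> //.
- move=> _ /JGP [i [j [j_range ->]]]; rewrite JdualE //.
  by apply/JGP; exists i, (lam i - j + 1); split=> //; lia.
- move=> _ /JGP [i [j [j_range ->]]].
  by rewrite !JdualE; [congr Jset | lia..]; lia.
- move=> _ _ /JGP [i [j [j_range ->]]] /JGP [i' [j' [j'_range ->]]].
  rewrite !JdualE // !Jset_subset //; lia.
Qed.
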